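(* For $\tau$ in the upper half-plane, $\mathfrak{p}^2(\tau)\mathfrak{p}^2(2\tau)+\mathfrak{p}^2(\tau)-2\mathfrak{p}(2\tau)=0$.
   Context: $q=e^{2\pi i\tau}$, $q^r:=e^{2\pi i r\tau}$, and $\mathfrak{p}(\tau)=2q^{1/16}\prod_{n\ge1}\left(\frac{1+q^{n/2}}{1+q^{n/2-1/4}}\right)^2$ (equivalently $\mathfrak{f}_2(\tau/2)^2/\mathfrak{f}(\tau/2)^2$ with Weber–Schläfli functions $\mathfrak{f},\mathfrak{f}_2$). *)

From Stdlib Require Import Reals.
From Coquelicot Require Export Coquelicot.
Open Scope R_scope.

Definition cexp (z : C) : C :=
  (exp (Re z) * cos (Im z), exp (Re z) * sin (Im z)).

Definition qpow (r : R) (tau : C) : C :=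
  cexp (Cmult (RtoC (2 * PI * r)) (Cmult Ci tau)).

Definition pfactor (tau : C) (n : nat) : C :=
  let a := Cdiv (Cplus 1 (qpow (INR n / 2) tau))
                (Cplus 1 (qpow (INR n / 2 - 1/4) tau)) in
  Cmult a a.

Fixpoint ppartial (tau : C) (N : nat) : C :=
  match N with
  | O => 1%C
  | S M => Cmult (ppartial tau M) (pfactor tau (S M))
  end.

Definition pprod (tau : C) : C :=
  @lim C_CompleteNormedModule (filtermap (ppartial tau) eventually).

Definition pfrak (tau : C) : C :=
  Cmult (Cmult (RtoC 2) (qpow (1/16) tau)) (pprod tau).

(* With t = q^(1/4), the product in p(tau) is the square of
   prod_(n>=1) (1 + t^(2n)) / (1 + t^(2n-1)); by the Jacobi triple product (derived from
   the finite q-binomial theorem by a Tannery limit) this square is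
   theta(t, t) / (2 theta(t, 1)), where theta(x, z) = sum_(k in Z) x^(k^2) z^k. The
   identity is then Landen's transformation for this quotient. It follows from the
   duplication formulas theta(x, 1) theta(x, -1) = theta(x^2, -1)^2 and
   theta(x, x)^2 = 2 theta(x^2, x^2) theta(x^2, 1), read off the product side, and from
   theta(x, +-1) = theta(x^4, 1) +- x theta(x^4, x^4), obtained by splitting the series
   into even and odd indices. *)

From Stdlib Require Import Reals Lra Lia.
From Coquelicot Require Import Coquelicot.
Open Scope C_scope.

(** * Finite sums and products *)

Fixpoint csum (f : nat -> C) (n : nat) : C :=
  match n with O => 0 | S m => csum f m + f m end.

Fixpoint cprod (f : nat -> C) (n : nat) : C :=
  match n with O => 1 | S m => cprod f m * f m end.

Fixpoint rsum (f : nat -> R) (n : nat) : R :=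
  match n with O => 0%R | S m => (rsum f m + f m)%R end.

Lemma csum_ext (f g : nat -> C) n :
  (forall k, (k < n)%nat -> f k = g k) -> csum f n = csum g n.
Proof.
  induction n as [|n IH]; intros H; simpl; auto.
  rewrite IH, H; auto; intros; apply H; lia.
Qed.

Lemma cprod_ext (f g : nat -> C) n :
  (forall k, (k < n)%nat -> f k = g k) -> cprod f n = cprod g n.
Proof.
  induction n as [|n IH]; intros H; simpl; auto.
  rewrite IH, H; auto; intros; apply H; lia.
Qed.

Lemma csum_split (f : nat -> C) a b :
  csum f (a + b) = csum f a + csum (fun i => f (a + i)%nat) b.
Proof.
  induction b as [|b IH]; simpl.
  - rewrite Nat.add_0_r. ring.
  - rewrite Nat.add_succ_r; simpl. rewrite IH. ring.
Qed.

Lemma cprod_split (f : nat -> C) a b :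
  cprod f (a + b) = cprod f a * cprod (fun i => f (a + i)%nat) b.
Proof.
  induction b as [|b IH]; simpl.
  - rewrite Nat.add_0_r. ring.
  - rewrite Nat.add_succ_r; simpl. rewrite IH. ring.
Qed.

Lemma csum_S_l (f : nat -> C) n : csum f (S n) = f O + csum (fun i => f (S i)) n.
Proof. rewrite <- Nat.add_1_l, csum_split. simpl. ring. Qed.

Lemma cprod_S_l (f : nat -> C) n : cprod f (S n) = f O * cprod (fun i => f (S i)) n.
Proof. rewrite <- Nat.add_1_l, cprod_split. simpl. ring. Qed.

Lemma csum_rev (f : nat -> C) n : csum f n = csum (fun i => f (n - 1 - i)%nat) n.
Proof.
  induction n as [|n IH]; auto.
  change (csum f (S n)) with (csum f n + f n).
  rewrite csum_S_l, IH, Cplus_comm.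
  f_equal; [f_equal; lia | apply csum_ext; intros; f_equal; lia].
Qed.

Lemma cprod_rev (f : nat -> C) n : cprod f n = cprod (fun i => f (n - 1 - i)%nat) n.
Proof.
  induction n as [|n IH]; auto.
  change (cprod f (S n)) with (cprod f n * f n).
  rewrite cprod_S_l, IH, Cmult_comm.
  f_equal; [f_equal; lia | apply cprod_ext; intros; f_equal; lia].
Qed.

Lemma csum_around_middle (f : nat -> C) n :
  csum f (S (2 * n)) =
  csum (fun i => f (n - 1 - i)%nat) n + f n + csum (fun i => f (n + 1 + i)%nat) n.
Proof.
  replace (S (2 * n)) with (n + (1 + n))%nat by lia.
  rewrite csum_split, (csum_rev f n), (csum_split (fun i => f (n + i)%nat) 1 n).
  simpl csum at 2. rewrite Nat.add_0_r, Cplus_0_l, Cplus_assoc.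
  f_equal. apply csum_ext. intros. f_equal. lia.
Qed.

Lemma csum_plus (f g : nat -> C) n : csum (fun k => f k + g k) n = csum f n + csum g n.
Proof. induction n; simpl; [|rewrite IHn]; ring. Qed.

Lemma csum_scal c (f : nat -> C) n : csum (fun k => c * f k) n = c * csum f n.
Proof. induction n; simpl; [|rewrite IHn]; ring. Qed.

Lemma cprod_mult (f g : nat -> C) n : cprod (fun k => f k * g k) n = cprod f n * cprod g n.
Proof. induction n; simpl; [|rewrite IHn]; ring. Qed.

Lemma cprod_neq0 (f : nat -> C) n : (forall k, f k <> 0) -> cprod f n <> 0.
Proof. intros H. induction n; simpl. apply C1_nz. apply Cmult_neq_0; auto. Qed.

Lemma cprod_inv (f : nat -> C) n :
  (forall k, f k <> 0) -> cprod (fun k => / f k) n = / cprod f n.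
Proof.
  intros H. induction n; simpl. { field. }
  rewrite IHn. field. split; auto. apply cprod_neq0; auto.
Qed.

Lemma Cmod_csum_le (f : nat -> C) n : (Cmod (csum f n) <= rsum (fun k => Cmod (f k)) n)%R.
Proof.
  induction n; simpl. { rewrite Cmod_0; lra. }
  eapply Rle_trans. apply Cmod_triangle. lra.
Qed.

Lemma rsum_le (f g : nat -> R) n :
  (forall k, (k < n)%nat -> f k <= g k)%R -> (rsum f n <= rsum g n)%R.
Proof.
  induction n; simpl; intros H. lra.
  assert (f n <= g n)%R by (apply H; lia).
  assert (rsum f n <= rsum g n)%R by (apply IHn; intros; apply H; lia). lra.
Qed.

Lemma rsum_geom K r n : (r <> 1)%R -> (rsum (fun k => K * r ^ k) n = K * (1 - r ^ n) / (1 - r))%R.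
Proof. intros. induction n; simpl; [|rewrite IHn]; field; lra. Qed.

(** * Limits of complex sequences *)

Definition cv (u : nat -> C) (l : C) : Prop := filterlim u eventually (locally l).

Lemma cvP (u : nat -> C) l :
  cv u l <-> forall eps, (0 < eps)%R -> exists N, forall n, (N <= n)%nat -> (Cmod (u n - l) < eps)%R.
Proof.
  unfold cv. rewrite filterlim_locally_ball_norm. split.
  - intros H eps Heps. exact (H (mkposreal eps Heps)).
  - intros H eps. exact (H eps (cond_pos eps)).
Qed.

Lemma cv_const (c : C) : cv (fun _ => c) c.
Proof. apply filterlim_const. Qed.

Lemma cv_ext (u v : nat -> C) l : eventually (fun n => u n = v n) -> cv u l -> cv v l.
Proof. apply filterlim_ext_loc. Qed.

Lemma cv_unique (u : nat -> C) l1 l2 : cv u l1 -> cv u l2 -> l1 = l2.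
Proof.
  exact (@filterlim_locally_unique nat C_AbsRing C_NormedModule eventually
           (Proper_StrongProper _ eventually_filter) u l1 l2).
Qed.

Lemma cv_plus (u v : nat -> C) a b : cv u a -> cv v b -> cv (fun n => u n + v n) (a + b).
Proof.
  intros Hu Hv. apply (filterlim_comp_2 (G := locally a) (H := locally b)); auto.
  apply (@filterlim_plus C_AbsRing).
Qed.

(* [C] carries two uniform structures in Coquelicot, the product one used by [cv] and
   the one of the absolute ring [C_AbsRing] needed for [filterlim_mult]; they have the
   same convergent sequences. *)
Lemma cv_AbsRing (u : nat -> C) a :
  cv u a <-> filterlim u eventually (@locally (AbsRing_UniformSpace C_AbsRing) a).
Proof.
  rewrite cvP. split.
  - intros H. apply (filterlim_locally (U := AbsRing_UniformSpace C_AbsRing)).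
    intros eps. exact (H eps (cond_pos eps)).
  - intros H eps Heps.
    exact (proj1 (filterlim_locally (U := AbsRing_UniformSpace C_AbsRing) u a) H
             (mkposreal eps Heps)).
Qed.

Lemma cv_mult (u v : nat -> C) a b : cv u a -> cv v b -> cv (fun n => u n * v n) (a * b).
Proof.
  rewrite !cv_AbsRing. intros Hu Hv.
  exact (filterlim_comp_2 u v mult Hu Hv (@filterlim_mult C_AbsRing a b)).
Qed.

Lemma cv_opp (u : nat -> C) a : cv u a -> cv (fun n => - u n) (- a).
Proof. intros Hu. exact (filterlim_comp _ _ _ u opp _ _ _ Hu (@filterlim_opp C_AbsRing _ a)). Qed.

Lemma cv_minus (u v : nat -> C) a b : cv u a -> cv v b -> cv (fun n => u n - v n) (a - b).
Proof. intros. apply cv_plus; auto. apply cv_opp; auto. Qed.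

Lemma cv_scal c (u : nat -> C) a : cv u a -> cv (fun n => c * u n) (c * a).
Proof. intros. apply cv_mult; auto. apply cv_const. Qed.

Lemma Cmod_sub_sym (a b : C) : Cmod (a - b) = Cmod (b - a).
Proof. replace (a - b) with (- (b - a)) by ring. apply Cmod_opp. Qed.

Lemma cv_inv (u : nat -> C) a : cv u a -> a <> 0 -> cv (fun n => / u n) (/ a).
Proof.
  rewrite !cvP. intros Hu Ha. assert (Hp : (0 < Cmod a)%R) by (apply Cmod_gt_0; auto).
  destruct (Hu (Cmod a / 2)%R) as [N1 H1]; [lra|].
  assert (Hlow : forall n, (N1 <= n)%nat -> (Cmod a / 2 <= Cmod (u n))%R).
  { intros n Hn. specialize (H1 n Hn). rewrite Cmod_sub_sym in H1.
    assert (Cmod a <= Cmod (u n) + Cmod (a - u n))%R.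
    { replace a with (u n + (a - u n)) at 1 by ring. apply Cmod_triangle. }
    lra. }
  intros e He. destruct (Hu (e * (Cmod a * Cmod a / 2))%R) as [N2 H2].
  { apply Rmult_lt_0_compat; [lra|]. apply Rmult_lt_0_compat; [nra|lra]. }
  exists (N1 + N2)%nat. intros n Hn.
  specialize (H2 n ltac:(lia)). specialize (Hlow n ltac:(lia)).
  assert (Hun : u n <> 0) by (intro E; rewrite E, Cmod_0 in Hlow; lra).
  replace (/ u n - / a) with ((a - u n) / (u n * a)) by (field; auto).
  rewrite Cmod_div, Cmod_mult, Cmod_sub_sym by (apply Cmult_neq_0; auto).
  apply Rmult_lt_reg_r with (Cmod (u n) * Cmod a)%R; [nra|].
  unfold Rdiv. rewrite Rmult_assoc, Rinv_l, Rmult_1_r by nra.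
  assert (e * (Cmod a * Cmod a / 2) <= e * (Cmod (u n) * Cmod a))%R
    by (apply Rmult_le_compat_l; nra).
  lra.
Qed.

Lemma cv_div (u v : nat -> C) a b : cv u a -> cv v b -> b <> 0 -> cv (fun n => u n / v n) (a / b).
Proof. intros. apply cv_mult; auto. apply cv_inv; auto. Qed.

Lemma filterlim_nat_unbounded (phi : nat -> nat) :
  (forall N, exists M, forall n, (M <= n)%nat -> (N <= phi n)%nat) ->
  filterlim phi eventually eventually.
Proof.
  intros Hphi P [N HN]. destruct (Hphi N) as [M HM]. exists M. auto.
Qed.

Lemma cv_comp (u : nat -> C) l phi :
  cv u l -> filterlim phi eventually eventually -> cv (fun n => u (phi n)) l.
Proof. intros Hu Hphi. exact (filterlim_comp _ _ _ phi u _ _ _ Hphi Hu). Qed.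

Lemma cv_subseq (u : nat -> C) l phi :
  cv u l -> (forall n, (n <= phi n)%nat) -> cv (fun n => u (phi n)) l.
Proof.
  intros Hu Hphi. apply cv_comp; auto.
  apply filterlim_nat_unbounded. intros N. exists N. intros n Hn. specialize (Hphi n). lia.
Qed.

Lemma csum_cv (f : nat -> nat -> C) (l : nat -> C) M :
  (forall k, (k < M)%nat -> cv (fun n => f n k) (l k)) ->
  cv (fun n => csum (f n) M) (csum l M).
Proof.
  induction M as [|M IH]; intros H; simpl.
  - apply cv_const.
  - apply cv_plus; [apply IH; intros; apply H|apply H]; lia.
Qed.

Definition Lim (u : nat -> C) : C := @lim C_CompleteNormedModule (filtermap u eventually).

Lemma cv_Lim (u : nat -> C) l : cv u l -> Lim u = l.
Proof.
  intros H. apply (cv_unique u); auto.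
  assert (Hcauchy : @cauchy C_CompleteNormedModule (filtermap u eventually)).
  { intros e. exists l. apply (proj1 (filterlim_locally u l) H e). }
  intros P [eps HP]. eapply filter_imp; [intros x Hx; apply HP, Hx|].
  exact (@complete_cauchy C_CompleteNormedModule (filtermap u eventually)
           (filtermap_proper_filter _ _ u _ eventually_filter) Hcauchy eps).
Qed.

Lemma cv_Lim_exists (u : nat -> C) : (exists l, cv u l) -> cv u (Lim u).
Proof. intros [l Hl]. rewrite (cv_Lim u l Hl). exact Hl. Qed.

Lemma Cauchy_cv (u : nat -> C) :
  (forall eps, (0 < eps)%R -> exists N, forall m n, (N <= m)%nat -> (N <= n)%nat ->
     (Cmod (u m - u n) < eps)%R) ->
  exists l, cv u l.
Proof.
  intros H. apply (filterlim_locally_cauchy (F := eventually) (U := C_CompleteNormedModule)).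
  intros eps. destruct (H eps (cond_pos eps)) as [N HN].
  exists (fun n => (N <= n)%nat). split; [exists N; auto|].
  intros m n Hm Hn. apply (@norm_compat1 C_AbsRing C_NormedModule).
  exact (HN n m Hn Hm).
Qed.

(** * Geometric bounds and Tannery's theorem *)

Lemma pow_le_one r k : (0 <= r <= 1)%R -> (r ^ k <= 1)%R.
Proof. intros. rewrite <- (pow1 k). apply pow_incr. lra. Qed.

Lemma pow_le_pow_decr r m n : (0 <= r <= 1)%R -> (m <= n)%nat -> (r ^ n <= r ^ m)%R.
Proof.
  intros Hr H. replace n with (m + (n - m))%nat by lia. rewrite pow_add.
  assert (0 <= r ^ m)%R by (apply pow_le; lra).
  assert (r ^ (n - m) <= 1)%R by (apply pow_le_one; auto). nra.
Qed.

Lemma geom_small K r e : (0 <= r < 1)%R -> (0 < e)%R ->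
  exists N, forall n, (N <= n)%nat -> (K * r ^ n < e)%R.
Proof.
  intros Hr He. assert (HK : (0 < Rabs K + 1)%R) by (pose proof (Rabs_pos K); lra).
  destruct (pow_lt_1_zero r ltac:(rewrite Rabs_pos_eq; lra) (e / (Rabs K + 1)))
    as [N HN]; [apply Rdiv_lt_0_compat; lra|].
  exists N. intros n Hn. specialize (HN n Hn).
  assert (Hrn : (0 <= r ^ n)%R) by (apply pow_le; lra).
  rewrite Rabs_pos_eq in HN by lra.
  apply Rmult_lt_compat_l with (r := (Rabs K + 1)%R) in HN; [|lra].
  replace ((Rabs K + 1) * (e / (Rabs K + 1)))%R with e in HN by (field; lra).
  pose proof (Rle_abs K). nra.
Qed.

Lemma Cminus_0_r (z : C) : z - 0 = z.
Proof. ring. Qed.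

Lemma cv_geom_null (w : nat -> C) K r :
  (0 <= r < 1)%R -> (forall n, Cmod (w n) <= K * r ^ n)%R -> cv w 0.
Proof.
  intros Hr H. apply cvP. intros e He. destruct (geom_small K r e Hr He) as [N HN].
  exists N. intros n Hn. rewrite Cminus_0_r. eapply Rle_lt_trans; eauto.
Qed.

Lemma Cmod_csum_geom_le (f : nat -> C) B r M j : (0 <= r < 1)%R -> (0 <= B)%R ->
  (forall i, (i < j)%nat -> Cmod (f (M + i)%nat) <= B * r ^ (M + i))%R ->
  (Cmod (csum (fun i => f (M + i)%nat) j) <= B / (1 - r) * r ^ M)%R.
Proof.
  intros Hr HB H. eapply Rle_trans; [apply Cmod_csum_le|].
  eapply Rle_trans; [apply rsum_le with (g := fun i => (B * r ^ M * r ^ i)%R)|].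
  { intros i Hi. rewrite Rmult_assoc, <- pow_add. auto. }
  rewrite rsum_geom by lra.
  assert (0 <= r ^ j)%R by (apply pow_le; lra).
  assert (0 <= B * r ^ M)%R by (apply Rmult_le_pos; [|apply pow_le]; lra).
  replace (B / (1 - r) * r ^ M)%R with (B * r ^ M * 1 / (1 - r))%R by (field; lra).
  apply Rmult_le_compat_r; [apply Rlt_le, Rinv_0_lt_compat; lra|]. nra.
Qed.

Lemma csum_telescope (u : nat -> C) n j :
  u (n + j)%nat - u n = csum (fun i => u (S (n + i)) - u (n + i)%nat) j.
Proof.
  induction j as [|j IH]; simpl.
  - rewrite Nat.add_0_r. ring.
  - rewrite <- IH, Nat.add_succ_r. ring.
Qed.

Lemma cv_of_geom_increments (u : nat -> C) K r : (0 <= r < 1)%R -> (0 <= K)%R ->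
  (forall n, Cmod (u (S n) - u n) <= K * r ^ n)%R -> exists l, cv u l.
Proof.
  intros Hr HK H. apply Cauchy_cv. intros e He.
  destruct (geom_small (K / (1 - r)) r (e / 2) Hr) as [N HN]; [lra|].
  assert (Hfrom : forall p, (N <= p)%nat -> (Cmod (u p - u N) <= K / (1 - r) * r ^ N)%R).
  { intros p Hp. replace p with (N + (p - N))%nat by lia.
    rewrite csum_telescope.
    apply (Cmod_csum_geom_le (fun k => u (S k) - u k)); auto. }
  exists N. intros m n Hm Hn. specialize (HN N (le_n N)).
  replace (u m - u n) with ((u m - u N) + - (u n - u N)) by ring.
  eapply Rle_lt_trans; [apply Cmod_triangle|]. rewrite Cmod_opp.
  pose proof (Hfrom m Hm). pose proof (Hfrom n Hn). lra.
Qed.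

Lemma series_cv (c : nat -> C) K r : (0 <= r < 1)%R -> (0 <= K)%R ->
  (forall n, Cmod (c n) <= K * r ^ n)%R -> exists l, cv (csum c) l.
Proof.
  intros Hr HK H. apply (cv_of_geom_increments _ K r); auto.
  intros n. simpl. replace (csum c n + c n - csum c n) with (c n) by ring. auto.
Qed.

Lemma tannery_null (h : nat -> nat -> C) (a : nat -> C) G C0 K r :
  (0 <= r < 1)%R -> (0 <= K)%R ->
  (forall n k, (k <= n)%nat -> Cmod (h n k) <= C0)%R ->
  (forall k, cv (fun n => h n k) G) ->
  (forall k, Cmod (a k) <= K * r ^ k)%R ->
  cv (fun n => csum (fun k => (h n k - G) * a k) (S n)) 0.
Proof.
  intros Hr HK Hh Hcv Ha.
  assert (HC0 : (0 <= C0)%R) by (pose proof (Hh O O (le_n O)); pose proof (Cmod_ge_0 (h O O)); lra).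
  set (B := ((C0 + Cmod G) * K)%R).
  assert (HB : (0 <= B)%R) by (unfold B; pose proof (Cmod_ge_0 G); apply Rmult_le_pos; lra).
  assert (Hhead : forall M, cv (fun n => csum (fun k => (h n k - G) * a k) M)
                              (csum (fun k => (G - G) * a k) M)).
  { intros M. apply csum_cv. intros k _.
    apply cv_mult; [apply cv_minus; [apply Hcv|]|]; apply cv_const. }
  apply cvP. intros e He.
  destruct (geom_small (B / (1 - r)) r (e / 2) Hr) as [M HM]; [lra|].
  destruct (proj1 (cvP _ _) (Hhead M) (e / 2)%R) as [N HN]; [lra|].
  exists (N + M)%nat. intros n Hn. specialize (HN n ltac:(lia)). specialize (HM M (le_n M)).
  rewrite csum_scal in HN. replace ((G - G) * csum a M) with (RtoC 0) in HN by ring.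
  replace (S n) with (M + (S n - M))%nat by lia. rewrite csum_split.
  assert (Htail : Cmod (csum (fun i => (h n (M + i)%nat - G) * a (M + i)%nat) (S n - M))
                   <= B / (1 - r) * r ^ M).
  { apply (Cmod_csum_geom_le (fun k => (h n k - G) * a k)); auto.
    intros i Hi. rewrite Cmod_mult. unfold B.
    assert (Cmod (h n (M + i)%nat - G) <= C0 + Cmod G)%R.
    { eapply Rle_trans; [apply Cmod_triangle|]. rewrite Cmod_opp.
      pose proof (Hh n (M + i)%nat ltac:(lia)). lra. }
    rewrite Rmult_assoc. apply Rmult_le_compat; auto using Cmod_ge_0. }
  rewrite Cminus_0_r in *. eapply Rle_lt_trans; [apply Cmod_triangle|]. lra.
Qed.

Lemma tannery (h : nat -> nat -> C) (a : nat -> C) G s C0 K r :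
  (0 <= r < 1)%R -> (0 <= K)%R ->
  (forall n k, (k <= n)%nat -> Cmod (h n k) <= C0)%R ->
  (forall k, cv (fun n => h n k) G) ->
  (forall k, Cmod (a k) <= K * r ^ k)%R ->
  cv (csum a) s ->
  cv (fun n => csum (fun k => h n k * a k) (S n)) (G * s).
Proof.
  intros Hr HK Hh Hcv Ha Hs. replace (G * s) with (0 + G * s) by ring.
  eapply cv_ext.
  2: apply cv_plus; [exact (tannery_null h a G C0 K r Hr HK Hh Hcv Ha)|].
  2: apply cv_scal, (cv_subseq (csum a) s S Hs); auto.
  exists O. intros n _. rewrite <- csum_scal, <- csum_plus. apply csum_ext. intros; ring.
Qed.

(** * Infinite products *)

Lemma exp_le x y : (x <= y)%R -> (exp x <= exp y)%R.
Proof. intros [H|H]; [left; apply exp_increasing; auto | subst; lra]. Qed.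

Lemma Cmod_cprod_1_plus_le (c : nat -> C) K r : (0 <= r < 1)%R -> (0 <= K)%R ->
  (forall n, Cmod (c n) <= K * r ^ n)%R ->
  forall n, Cmod (cprod (fun k => 1 + c k) n) <= exp (K / (1 - r)).
Proof.
  intros Hr HK H.
  assert (Hexp : forall n, Cmod (cprod (fun k => 1 + c k) n)
                             <= exp (rsum (fun k => (K * r ^ k)%R) n)).
  { induction n; simpl.
    - rewrite Cmod_1, exp_0. lra.
    - rewrite Cmod_mult, exp_plus.
      apply Rmult_le_compat; auto using Cmod_ge_0.
      eapply Rle_trans; [apply Cmod_triangle|]. rewrite Cmod_1.
      eapply Rle_trans; [|apply exp_ineq1_le]. specialize (H n). lra. }
  intros n. eapply Rle_trans; [apply Hexp|]. rewrite rsum_geom by lra. apply exp_le.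
  assert (0 <= r ^ n)%R by (apply pow_le; lra).
  unfold Rdiv. apply Rmult_le_compat_r; [apply Rlt_le, Rinv_0_lt_compat; lra|]. nra.
Qed.

Lemma cprod_1_plus_cv (c : nat -> C) K r : (0 <= r < 1)%R -> (0 <= K)%R ->
  (forall n, Cmod (c n) <= K * r ^ n)%R -> exists l, cv (cprod (fun k => 1 + c k)) l.
Proof.
  intros Hr HK H. apply (cv_of_geom_increments _ (exp (K / (1 - r)) * K) r); auto.
  { apply Rmult_le_pos; auto. apply Rlt_le, exp_pos. }
  intros n. simpl.
  replace (cprod (fun k => 1 + c k) n * (1 + c n) - cprod (fun k => 1 + c k) n)
    with (cprod (fun k => 1 + c k) n * c n) by ring.
  rewrite Cmod_mult, Rmult_assoc.
  apply Rmult_le_compat; auto using Cmod_ge_0, Cmod_cprod_1_plus_le.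
Qed.

(* [qprod a b n] is the q-Pochhammer symbol (-a; b)_n. *)
Definition qprod (a b : C) (n : nat) : C := cprod (fun k => 1 + a * b ^ k) n.

Definition qprod_inf (a b : C) : C := Lim (qprod a b).

Lemma qprod_S a b n : qprod a b (S n) = qprod a b n * (1 + a * b ^ n).
Proof. reflexivity. Qed.

Lemma Cmod_mul_pow_le (a b : C) k : (Cmod a <= 1)%R -> (Cmod (a * b ^ k) <= Cmod b ^ k)%R.
Proof.
  intros Ha. rewrite Cmod_mult, Cmod_pow.
  assert (0 <= Cmod b ^ k)%R by (apply pow_le, Cmod_ge_0). nra.
Qed.

Lemma Cmod_qprod_le a b n : (Cmod a <= 1)%R -> (Cmod b < 1)%R ->
  (Cmod (qprod a b n) <= exp (1 / (1 - Cmod b)))%R.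
Proof.
  intros Ha Hb. apply (Cmod_cprod_1_plus_le (fun k => a * b ^ k)); [split|lra|].
  - apply Cmod_ge_0.
  - auto.
  - intros k. rewrite Rmult_1_l. apply Cmod_mul_pow_le; auto.
Qed.

Lemma qprod_cv a b : (Cmod a <= 1)%R -> (Cmod b < 1)%R -> cv (qprod a b) (qprod_inf a b).
Proof.
  intros Ha Hb. apply cv_Lim_exists.
  apply (cprod_1_plus_cv (fun k => a * b ^ k) 1 (Cmod b)); [split|lra|].
  - apply Cmod_ge_0.
  - auto.
  - intros k. rewrite Rmult_1_l. apply Cmod_mul_pow_le; auto.
Qed.

Lemma qprod_factor_lower a b k : (Cmod a < 1)%R -> (Cmod b < 1)%R ->
  (1 - Cmod a <= Cmod (1 + a * b ^ k))%R.
Proof.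
  intros Ha Hb.
  assert (Cmod (a * b ^ k) <= Cmod a)%R.
  { rewrite Cmod_mult, Cmod_pow.
    assert (Cmod b ^ k <= 1)%R by (apply pow_le_one; pose proof (Cmod_ge_0 b); lra).
    pose proof (Cmod_ge_0 a). nra. }
  assert (Cmod 1 <= Cmod (1 + a * b ^ k) + Cmod (a * b ^ k))%R.
  { replace (RtoC 1) with ((1 + a * b ^ k) + - (a * b ^ k)) at 1 by ring.
    eapply Rle_trans; [apply Cmod_triangle|]. rewrite Cmod_opp. lra. }
  rewrite Cmod_1 in *. lra.
Qed.

Lemma qprod_factor_neq0 a b k : (Cmod a < 1)%R -> (Cmod b < 1)%R -> 1 + a * b ^ k <> 0.
Proof.
  intros Ha Hb E. pose proof (qprod_factor_lower a b k Ha Hb).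
  rewrite E, Cmod_0 in H. lra.
Qed.

Lemma qprod_neq0 a b n : (Cmod a < 1)%R -> (Cmod b < 1)%R -> qprod a b n <> 0.
Proof. intros. apply cprod_neq0. intros; apply qprod_factor_neq0; auto. Qed.

Lemma qprod_factor_inv_bound a b k : (Cmod a < 1)%R -> (Cmod b < 1)%R ->
  (Cmod (/ (1 + a * b ^ k) - 1) <= 1 / (1 - Cmod a) * Cmod b ^ k)%R.
Proof.
  intros Ha Hb. pose proof (qprod_factor_lower a b k Ha Hb).
  assert (Hnz := qprod_factor_neq0 a b k Ha Hb).
  replace (/ (1 + a * b ^ k) - 1) with (- a / (1 + a * b ^ k) * b ^ k) by (field; auto).
  rewrite Cmod_mult, Cmod_pow, Cmod_div, Cmod_opp by auto.
  apply Rmult_le_compat_r; [apply pow_le, Cmod_ge_0|].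
  unfold Rdiv. apply Rmult_le_compat; auto using Cmod_ge_0.
  - apply Rlt_le, Rinv_0_lt_compat. lra.
  - lra.
  - apply Rinv_le_contravar; lra.
Qed.

Lemma cprod_qprod_inv a b n : (Cmod a < 1)%R -> (Cmod b < 1)%R ->
  cprod (fun k => 1 + (/ (1 + a * b ^ k) - 1)) n = / qprod a b n.
Proof.
  intros Ha Hb. unfold qprod. rewrite <- cprod_inv by (intros; apply qprod_factor_neq0; auto).
  apply cprod_ext. intros. ring.
Qed.

Lemma Cmod_inv_qprod_le a b n : (Cmod a < 1)%R -> (Cmod b < 1)%R ->
  (Cmod (/ qprod a b n) <= exp (1 / (1 - Cmod a) / (1 - Cmod b)))%R.
Proof.
  intros Ha Hb. rewrite <- cprod_qprod_inv by auto.
  apply Cmod_cprod_1_plus_le; [split; auto using Cmod_ge_0| |].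
  - apply Rlt_le, Rdiv_lt_0_compat; lra.
  - intros; apply qprod_factor_inv_bound; auto.
Qed.

Lemma qprod_inf_neq0 a b : (Cmod a < 1)%R -> (Cmod b < 1)%R -> qprod_inf a b <> 0.
Proof.
  intros Ha Hb.
  destruct (cprod_1_plus_cv (fun k => / (1 + a * b ^ k) - 1) (1 / (1 - Cmod a)) (Cmod b))
    as [l Hl]; [split; auto using Cmod_ge_0| apply Rlt_le, Rdiv_lt_0_compat; lra|
                intros; apply qprod_factor_inv_bound; auto|].
  assert (Hone : cv (fun n => qprod a b n * cprod (fun k => 1 + (/ (1 + a * b ^ k) - 1)) n) 1).
  { eapply cv_ext; [|apply cv_const]. exists O. intros n _.
    rewrite cprod_qprod_inv by auto. field. apply qprod_neq0; auto. }
  assert (Hprod := cv_mult _ _ _ _ (qprod_cv a b ltac:(lra) Hb) Hl).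
  intros E. rewrite E, Cmult_0_l in Hprod. apply C1_nz. exact (cv_unique _ _ _ Hone Hprod).
Qed.

Lemma Cmod_sqr_lt (b : C) : Cmod b < 1 -> Cmod (b * b) < 1.
Proof. intros. rewrite Cmod_mult. pose proof (Cmod_ge_0 b). nra. Qed.

Lemma Cmod_sqr_le (b : C) : Cmod b <= 1 -> Cmod (b * b) <= 1.
Proof. intros. rewrite Cmod_mult. pose proof (Cmod_ge_0 b). nra. Qed.

Lemma qprod_inf_mul_opp a b : Cmod a <= 1 -> Cmod b < 1 ->
  qprod_inf a b * qprod_inf (- a) b = qprod_inf (- (a * a)) (b * b).
Proof.
  intros Ha Hb. eapply cv_unique.
  - apply cv_mult; apply qprod_cv; rewrite ?Cmod_opp; auto.
  - eapply cv_ext; [|apply qprod_cv; rewrite ?Cmod_opp; auto using Cmod_sqr_le, Cmod_sqr_lt].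
    exists O. intros n _. unfold qprod. rewrite <- cprod_mult.
    apply cprod_ext. intros. rewrite Cpow_mult_l. ring.
Qed.

Lemma qprod_even_odd a b n : qprod a b (2 * n) = qprod a (b * b) n * qprod (a * b) (b * b) n.
Proof.
  induction n as [|n IH]; [unfold qprod; simpl; ring|].
  replace (2 * S n)%nat with (S (S (2 * n))) by lia.
  rewrite !qprod_S, IH, !Cpow_mult_l.
  replace (S (2 * n)) with (n + n + 1)%nat by lia.
  replace (2 * n)%nat with (n + n)%nat by lia. rewrite !Cpow_add_r. ring.
Qed.

Lemma qprod_inf_even_odd a b : Cmod a <= 1 -> Cmod b < 1 ->
  qprod_inf a b = qprod_inf a (b * b) * qprod_inf (a * b) (b * b).
Proof.
  intros Ha Hb. eapply cv_unique.
  - apply (cv_subseq (qprod a b) _ (fun n => 2 * n)%nat); [apply qprod_cv; auto | intros; lia].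
  - eapply cv_ext.
    + exists O. intros n _. symmetry. apply qprod_even_odd.
    + apply cv_mult; apply qprod_cv; auto using Cmod_sqr_lt.
      rewrite Cmod_mult. pose proof (Cmod_ge_0 a). pose proof (Cmod_ge_0 b). nra.
Qed.

Lemma qprod_inf_one b : Cmod b < 1 -> qprod_inf 1 b = 2 * qprod_inf b b.
Proof.
  intros Hb. eapply cv_unique.
  - apply (cv_subseq (qprod 1 b) _ S); [apply qprod_cv; rewrite ?Cmod_1; auto; lra | auto].
  - eapply cv_ext; [|apply cv_scal, qprod_cv; auto; lra].
    exists O. intros n _. unfold qprod. rewrite cprod_S_l. simpl. ring_simplify.
    f_equal. apply cprod_ext. intros. simpl. ring.
Qed.

(** * Gaussian binomial coefficients *)

Definition qfact (p : C) (n : nat) : C := qprod (- p) p n.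

Definition gbinom (p : C) (N j : nat) : C :=
  if (j <=? N)%nat then qfact p N / (qfact p j * qfact p (N - j)) else 0.

Lemma qfact_0 p : qfact p 0 = 1.
Proof. reflexivity. Qed.

Lemma qfact_S p n : qfact p (S n) = qfact p n * (1 - p * p ^ n).
Proof. unfold qfact. rewrite qprod_S. ring. Qed.

Section GaussianBinomial.

Variable p : C.
Hypothesis qfact_neq0 : forall n, qfact p n <> 0.

Lemma gbinom_0 N : gbinom p N 0 = 1.
Proof. unfold gbinom. simpl. rewrite Nat.sub_0_r, qfact_0. field. auto. Qed.

Lemma gbinom_diag N : gbinom p N N = 1.
Proof. unfold gbinom. rewrite Nat.leb_refl, Nat.sub_diag, qfact_0. field. auto. Qed.

Lemma gbinom_gt N j : (N < j)%nat -> gbinom p N j = 0.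
Proof. intros. unfold gbinom. destruct (Nat.leb_spec j N); [lia|auto]. Qed.

Lemma gbinom_sym N j : (j <= N)%nat -> gbinom p N (N - j) = gbinom p N j.
Proof.
  intros. unfold gbinom.
  destruct (Nat.leb_spec j N), (Nat.leb_spec (N - j) N); try lia.
  replace (N - (N - j))%nat with j by lia. field. split; auto.
Qed.

Lemma gbinom_pascal N i : (i <= N)%nat ->
  gbinom p (S N) (S i) = gbinom p N (S i) + p ^ (N - i) * gbinom p N i.
Proof.
  intros H. destruct (Nat.eq_dec i N) as [->|Hne].
  { rewrite !gbinom_diag, gbinom_gt, Nat.sub_diag by lia. simpl. ring. }
  remember (N - S i)%nat as m. replace N with (S i + m)%nat by lia.
  unfold gbinom.
  destruct (Nat.leb_spec (S i) (S (S i + m))), (Nat.leb_spec (S i) (S i + m)),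
    (Nat.leb_spec i (S i + m)); try lia.
  replace (S (S i + m) - S i)%nat with (S m) by lia.
  replace (S i + m - S i)%nat with m by lia.
  replace (S i + m - i)%nat with (S m) by lia.
  rewrite !qfact_S. replace (S i + m)%nat with (i + 1 + m)%nat by lia.
  rewrite !Cpow_add_r.
  assert (Hi : 1 - p * p ^ i <> 0) by (intro E; apply (qfact_neq0 (S i)); rewrite qfact_S, E; ring).
  assert (Hm : 1 - p * p ^ m <> 0) by (intro E; apply (qfact_neq0 (S m)); rewrite qfact_S, E; ring).
  simpl. field. repeat split; auto.
Qed.

End GaussianBinomial.

Lemma Cpow_sqr (x : C) m : (x * x) ^ m = x ^ (2 * m).
Proof. rewrite Cpow_mult_r. f_equal. simpl. ring. Qed.

Section QBinomial.

Variables x y : C.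
Hypothesis qfact_neq0 : forall n, qfact (x * x) n <> 0.

Let term N j := gbinom (x * x) N j * x ^ (j * j) * y ^ j.

Lemma q_binomial_step N :
  csum (term (S N)) (S (S N)) = csum (term N) (S N) * (1 + y * x * (x * x) ^ N).
Proof.
  unfold term. replace (S (S N)) with (1 + S N)%nat by lia.
  rewrite csum_split. simpl csum at 1.
  rewrite (csum_ext _ (fun i => gbinom (x * x) N (1 + i) * x ^ ((1 + i) * (1 + i)) * y ^ (1 + i)
     + (x * x) ^ (N - i) * gbinom (x * x) N i * x ^ ((1 + i) * (1 + i)) * y ^ (1 + i)))
    by (intros k Hk; simpl; rewrite gbinom_pascal by (auto; lia); ring).
  rewrite csum_plus.
  assert (Hshift : gbinom (x * x) (S N) 0 * x ^ (0 * 0) * y ^ 0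
      + csum (fun i => gbinom (x * x) N (1 + i) * x ^ ((1 + i) * (1 + i)) * y ^ (1 + i)) (S N)
    = csum (fun j => gbinom (x * x) N j * x ^ (j * j) * y ^ j) (S N)).
  { transitivity (csum (fun j => gbinom (x * x) N j * x ^ (j * j) * y ^ j) (1 + S N)).
    - rewrite (csum_split _ 1 (S N)). simpl csum at 2. rewrite !(gbinom_0 _ qfact_neq0).
      cbn [Nat.mul Cpow]. ring.
    - replace (1 + S N)%nat with (S (S N)) by lia. simpl csum at 1.
      rewrite (gbinom_gt _ N (S N)) by lia. simpl. ring. }
  assert (Hraise : csum (fun i => (x * x) ^ (N - i) * gbinom (x * x) N i
                                   * x ^ ((1 + i) * (1 + i)) * y ^ (1 + i)) (S N)
    = csum (fun j => gbinom (x * x) N j * x ^ (j * j) * y ^ j) (S N) * (y * x * (x * x) ^ N)).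
  { rewrite (Cmult_comm (csum _ (S N))), <- csum_scal. apply csum_ext. intros k Hk.
    assert (Hexp : (x * x) ^ (N - k) * x ^ ((1 + k) * (1 + k)) = x * (x * x) ^ N * x ^ (k * k)).
    { transitivity (x ^ S (2 * N + k * k)).
      - rewrite Cpow_sqr, <- Cpow_add_r. f_equal. nia.
      - rewrite Cpow_S, Cpow_add_r, Cpow_sqr. ring. }
    transitivity (gbinom (x * x) N k * y ^ (1 + k) * ((x * x) ^ (N - k) * x ^ ((1 + k) * (1 + k)))).
    { ring. }
    rewrite Hexp, (Cpow_add_r y 1 k), Cpow_1_r. ring. }
  cbn [Nat.mul Cpow] in Hshift. rewrite Hraise, <- Hshift. ring.
Qed.

Theorem q_binomial N :
  qprod (y * x) (x * x) N = csum (fun j => gbinom (x * x) N j * x ^ (j * j) * y ^ j) (S N).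
Proof.
  induction N as [|N IH].
  - unfold qprod. simpl. rewrite (gbinom_0 _ qfact_neq0). ring.
  - rewrite qprod_S, IH. symmetry. apply q_binomial_step.
Qed.

End QBinomial.

(** * The Jacobi triple product *)

(* The theta series sum over k in Z of x^(k^2) z^k, with the terms of index k and -k
   grouped together. *)
Definition theta_term (x z : C) (k : nat) : C :=
  match k with O => 1 | S _ => x ^ (k * k) * (z ^ k + (/ z) ^ k) end.

Lemma Cmult_eq_reg_l (c a b : C) : c * a = c * b -> c <> 0 -> a = b.
Proof. intros E Hc. rewrite <- (Cmult_1_l a), <- (Cinv_l c), <- Cmult_assoc, E by auto. field. auto. Qed.

Lemma Cpow_balance (x w : C) A B C D :
  x * w = 1 -> (A + D = C + B)%nat -> x ^ A * w ^ B = x ^ C * w ^ D.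
Proof.
  intros H E.
  assert (H1 : forall m, x ^ m * w ^ m = 1) by (intros; rewrite <- Cpow_mult_l, H; apply Cpow_1_l).
  transitivity (x ^ A * w ^ B * (x ^ D * w ^ D)); [rewrite H1; ring|].
  transitivity (x ^ C * w ^ D * (x ^ B * w ^ B)); [|rewrite H1; ring].
  transitivity (x ^ (A + D) * w ^ (B + D)); [rewrite !Cpow_add_r; ring|].
  rewrite E, !Cpow_add_r. ring.
Qed.

Lemma cprod_odd_powers (z w : C) n :
  cprod (fun i => z * w ^ (2 * i + 1)) n = z ^ n * w ^ (n * n).
Proof.
  induction n as [|n IH]; [simpl; ring|].
  change (cprod (fun i => z * w ^ (2 * i + 1)) (S n))
    with (cprod (fun i => z * w ^ (2 * i + 1)) n * (z * w ^ (2 * n + 1))).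
  rewrite IH. replace (S n * S n)%nat with (n * n + (2 * n + 1))%nat by nia.
  rewrite (Cpow_add_r w (n * n)), (Cpow_S z). ring.
Qed.

Section FiniteJacobi.

Variables x z : C.
Hypothesis x_neq0 : x <> 0.
Hypothesis z_neq0 : z <> 0.
Hypothesis qfact_neq0 : forall n, qfact (x * x) n <> 0.

Let w := / x.

Let xw : x * w = 1.
Proof. unfold w. field. auto. Qed.

Let w_neq0 : w <> 0.
Proof. intros E. apply C1_nz. rewrite <- xw, E. ring. Qed.

Let pow_xw m : x ^ m * w ^ m = 1.
Proof. rewrite <- Cpow_mult_l, xw. apply Cpow_1_l. Qed.

Lemma qprod_recentred n :
  qprod (z * w ^ (2 * n) * x) (x * x) (2 * n)
  = z ^ n * w ^ (n * n) * (qprod (z * x) (x * x) n * qprod (x / z) (x * x) n).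
Proof.
  unfold qprod.
  replace (cprod (fun k => 1 + z * w ^ (2 * n) * x * (x * x) ^ k) (2 * n))
    with (cprod (fun k => 1 + z * w ^ (2 * n) * x * (x * x) ^ k) (n + n)) by (f_equal; lia).
  rewrite cprod_split, cprod_rev.
  rewrite (cprod_ext _ (fun i => z * w ^ (2 * i + 1) * (1 + x / z * (x * x) ^ i))).
  2:{ intros i Hi. rewrite !Cpow_sqr.
      assert (E : w ^ (2 * n) * x * x ^ (2 * (n - 1 - i)) = w ^ (2 * i + 1)).
      { transitivity (x ^ (1 + 2 * (n - 1 - i)) * w ^ (2 * n)); [rewrite Cpow_add_r, Cpow_1_r; ring|].
        rewrite (Cpow_balance x w _ _ 0 (2 * i + 1)) by (auto; lia). simpl. ring. }
      transitivity (1 + z * (w ^ (2 * n) * x * x ^ (2 * (n - 1 - i)))); [ring|].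
      rewrite E. transitivity (z * w ^ (2 * i + 1) + x ^ (2 * i + 1) * w ^ (2 * i + 1)).
      - rewrite pow_xw. ring.
      - rewrite (Cpow_add_r x (2 * i) 1), Cpow_1_r. field. auto. }
  rewrite (cprod_ext (fun i => 1 + z * w ^ (2 * n) * x * (x * x) ^ (n + i))
                     (fun i => 1 + z * x * (x * x) ^ i)).
  2:{ intros i Hi. rewrite Cpow_add_r, (Cpow_sqr x n).
      transitivity (1 + z * x * (x * x) ^ i * (x ^ (2 * n) * w ^ (2 * n))); [ring|].
      rewrite pow_xw. ring. }
  rewrite cprod_mult, cprod_odd_powers. ring.
Qed.

Let binomial_term n j := gbinom (x * x) (2 * n) j * x ^ (j * j) * (z * w ^ (2 * n)) ^ j.

Lemma binomial_term_above n k :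
  binomial_term n (n + k) = z ^ n * w ^ (n * n) * (gbinom (x * x) (2 * n) (n + k) * x ^ (k * k) * z ^ k).
Proof.
  unfold binomial_term. rewrite Cpow_mult_l, <- Cpow_mult_r, Cpow_add_r.
  transitivity (gbinom (x * x) (2 * n) (n + k) * z ^ n * z ^ k
                * (x ^ ((n + k) * (n + k)) * w ^ (2 * n * (n + k)))); [ring|].
  rewrite (Cpow_balance x w _ _ (k * k) (n * n)) by (auto; nia). ring.
Qed.

Lemma binomial_term_below n k : (k <= n)%nat ->
  binomial_term n (n - k)
  = z ^ n * w ^ (n * n) * (gbinom (x * x) (2 * n) (n + k) * x ^ (k * k) * (/ z) ^ k).
Proof.
  intros Hk. unfold binomial_term. rewrite Cpow_mult_l, <- Cpow_mult_r.
  rewrite <- (gbinom_sym _ qfact_neq0 (2 * n) (n + k)) by lia.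
  replace (2 * n - (n + k))%nat with (n - k)%nat by lia.
  assert (Ez : z ^ (n - k) = z ^ n * (/ z) ^ k).
  { replace n with ((n - k) + k)%nat at 2 by lia.
    rewrite Cpow_add_r, Cpow_inv by auto. field. apply Cpow_nz. auto. }
  rewrite Ez.
  transitivity (gbinom (x * x) (2 * n) (n - k) * z ^ n * (/ z) ^ k
                * (x ^ ((n - k) * (n - k)) * w ^ (2 * n * (n - k)))); [ring|].
  rewrite (Cpow_balance x w _ _ (k * k) (n * n)); [ring|auto|].
  replace n with ((n - k) + k)%nat at 2 3 4 5 by lia. generalize (n - k)%nat. intros m. nia.
Qed.

Lemma binomial_sum_recentred n :
  csum (binomial_term n) (S (2 * n))
  = z ^ n * w ^ (n * n) * csum (fun k => gbinom (x * x) (2 * n) (n + k) * theta_term x z k) (S n).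
Proof.
  rewrite csum_around_middle, (csum_S_l _ n), Cmult_plus_distr_l, <- csum_scal.
  rewrite <- (Nat.add_0_r n) at 3. rewrite binomial_term_above.
  transitivity (z ^ n * w ^ (n * n) * (gbinom (x * x) (2 * n) (n + 0) * x ^ (0 * 0) * z ^ 0)
    + csum (fun i => binomial_term n (n - 1 - i) + binomial_term n (n + 1 + i)) n).
  { rewrite csum_plus. ring. }
  f_equal; [simpl; ring|]. apply csum_ext. intros i Hi.
  replace (n - 1 - i)%nat with (n - S i)%nat by lia.
  replace (n + 1 + i)%nat with (n + S i)%nat by lia.
  rewrite binomial_term_above, binomial_term_below by lia.
  change (theta_term x z (S i)) with (x ^ (S i * S i) * (z ^ S i + (/ z) ^ S i)). ring.
Qed.

Theorem finite_jacobi_triple_product n :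
  qprod (z * x) (x * x) n * qprod (x / z) (x * x) n
  = csum (fun k => gbinom (x * x) (2 * n) (n + k) * theta_term x z k) (S n).
Proof.
  assert (Hc : z ^ n * w ^ (n * n) <> 0).
  { apply Cmult_neq_0; apply Cpow_nz; auto. }
  apply (Cmult_eq_reg_l (z ^ n * w ^ (n * n))); auto.
  rewrite <- qprod_recentred, <- binomial_sum_recentred.
  apply q_binomial. auto.
Qed.

End FiniteJacobi.

Lemma qfact_neq0 p n : Cmod p < 1 -> qfact p n <> 0.
Proof. intros. apply qprod_neq0; rewrite ?Cmod_opp; auto. Qed.

Lemma qfact_cv p : Cmod p < 1 -> cv (qfact p) (qprod_inf (- p) p).
Proof. intros. apply qprod_cv; rewrite ?Cmod_opp; lra. Qed.

Lemma qprod_inf_opp_neq0 p : Cmod p < 1 -> qprod_inf (- p) p <> 0.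
Proof. intros. apply qprod_inf_neq0; rewrite ?Cmod_opp; auto. Qed.

Lemma gbinom_central_cv p k : Cmod p < 1 ->
  cv (fun n => gbinom p (2 * n) (n + k)) (/ qprod_inf (- p) p).
Proof.
  intros Hp. set (M := qprod_inf (- p) p). assert (HM : M <> 0) by (apply qprod_inf_opp_neq0; auto).
  replace (/ M) with (M / (M * M)) by (field; auto).
  apply cv_ext with (fun n => qfact p (2 * n) / (qfact p (n + k) * qfact p (n - k))).
  { exists k. intros n Hn. unfold gbinom. destruct (Nat.leb_spec (n + k) (2 * n)); [|lia].
    replace (2 * n - (n + k))%nat with (n - k)%nat by lia. reflexivity. }
  apply cv_div; [| |apply Cmult_neq_0; auto].
  - apply (cv_subseq (qfact p)); [apply qfact_cv; auto | intros; lia].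
  - apply cv_mult; [apply (cv_subseq (qfact p)); [apply qfact_cv; auto | intros; lia]|].
    apply (cv_comp (qfact p)); [apply qfact_cv; auto|].
    apply filterlim_nat_unbounded. intros N. exists (N + k)%nat. intros; lia.
Qed.

Lemma gbinom_bounded p : Cmod p < 1 -> exists C0, forall n k, Cmod (gbinom p n k) <= C0.
Proof.
  intros Hp.
  set (B1 := exp (1 / (1 - Cmod p))). set (B2 := exp (1 / (1 - Cmod (- p)) / (1 - Cmod p))).
  assert (H1 : forall n, Cmod (qfact p n) <= B1) by (intros; apply Cmod_qprod_le; rewrite ?Cmod_opp; lra).
  assert (H2 : forall n, Cmod (/ qfact p n) <= B2) by (intros; apply Cmod_inv_qprod_le; rewrite ?Cmod_opp; lra).
  assert (0 < B1 /\ 0 < B2)%R as [HB1 HB2] by (split; apply exp_pos).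
  exists (B1 * B2 * B2)%R. intros n k. unfold gbinom. destruct (k <=? n)%nat.
  - replace (qfact p n / (qfact p k * qfact p (n - k)))
      with (qfact p n * / qfact p k * / qfact p (n - k)) by (field; split; apply qfact_neq0; auto).
    rewrite !Cmod_mult.
    apply Rmult_le_compat; auto using Cmod_ge_0, Rmult_le_pos.
    apply Rmult_le_compat; auto using Cmod_ge_0.
  - rewrite Cmod_0. apply Rmult_le_pos; [apply Rmult_le_pos|]; lra.
Qed.

Lemma Cmod_theta_term_le (x z : C) k : x <> 0 -> Cmod x < 1 ->
  Cmod (z * x) <= 1 -> Cmod (x / z) <= 1 ->
  Cmod (theta_term x z k) <= 2 / Cmod x * Cmod x ^ k.
Proof.
  intros Hx Hx1 Hzx Hxz. assert (Hp : (0 < Cmod x)%R) by (apply Cmod_gt_0; auto).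
  destruct k as [|j].
  { simpl. rewrite Cmod_1, Rmult_1_r.
    assert (1 < / Cmod x)%R by (rewrite <- Rinv_1; apply Rinv_lt_contravar; lra).
    unfold Rdiv. lra. }
  assert (Hpow : forall v : C, Cmod x * Cmod v <= 1 ->
                   Cmod (x ^ (S j * S j)) * Cmod (v ^ S j) <= Cmod x ^ j).
  { intros v Hv. rewrite !Cmod_pow. replace (S j * S j)%nat with (j * S j + S j)%nat by lia.
    rewrite pow_add, Rmult_assoc, <- Rpow_mult_distr.
    assert (0 <= Cmod x * Cmod v)%R by (apply Rmult_le_pos; apply Cmod_ge_0).
    assert ((Cmod x * Cmod v) ^ S j <= 1)%R by (apply pow_le_one; lra).
    assert (Cmod x ^ (j * S j) <= Cmod x ^ j)%R by (apply pow_le_pow_decr; [lra|nia]).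
    assert (0 <= Cmod x ^ (j * S j))%R by (apply pow_le; lra). nra. }
  assert (E1 := Hpow z ltac:(rewrite <- Cmod_mult, Cmult_comm; auto)).
  assert (E2 := Hpow (/ z) ltac:(rewrite <- Cmod_mult; auto)).
  unfold theta_term. rewrite Cmod_mult.
  assert (Cmod (z ^ S j + (/ z) ^ S j) <= Cmod (z ^ S j) + Cmod ((/ z) ^ S j))
    by apply Cmod_triangle.
  assert (0 <= Cmod (x ^ (S j * S j))) by apply Cmod_ge_0.
  replace (2 / Cmod x * Cmod x ^ S j)%R with (2 * Cmod x ^ j)%R by (simpl; field; lra). nra.
Qed.

Theorem jacobi_triple_product (x z : C) : x <> 0 -> z <> 0 -> Cmod x < 1 ->
  Cmod (z * x) <= 1 -> Cmod (x / z) <= 1 ->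
  cv (csum (theta_term x z))
     (qprod_inf (- (x * x)) (x * x) * qprod_inf (z * x) (x * x) * qprod_inf (x / z) (x * x)).
Proof.
  intros Hx Hz Hx1 Hzx Hxz. set (p := x * x).
  assert (Hp : Cmod p < 1) by (apply Cmod_sqr_lt; auto).
  assert (Hx0 : (0 < Cmod x)%R) by (apply Cmod_gt_0; auto).
  assert (HK : (0 <= 2 / Cmod x)%R) by (apply Rlt_le, Rdiv_lt_0_compat; lra).
  assert (Hbound : forall k, Cmod (theta_term x z k) <= 2 / Cmod x * Cmod x ^ k)
    by (intros; apply Cmod_theta_term_le; auto).
  destruct (gbinom_bounded p Hp) as [C0 HC0].
  destruct (series_cv (theta_term x z) (2 / Cmod x) (Cmod x)) as [s Hs];
    [split; auto using Cmod_ge_0 | auto | auto |].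
  assert (Hlim : cv (fun n => csum (fun k => gbinom p (2 * n) (n + k) * theta_term x z k) (S n))
                    (/ qprod_inf (- p) p * s))
    by (apply (tannery _ _ _ _ C0 (2 / Cmod x) (Cmod x)); auto using Cmod_ge_0, gbinom_central_cv).
  assert (Hprod : cv (fun n => csum (fun k => gbinom p (2 * n) (n + k) * theta_term x z k) (S n))
                     (qprod_inf (z * x) p * qprod_inf (x / z) p)).
  { eapply cv_ext; [exists O; intros n _; apply finite_jacobi_triple_product; auto|].
    - intros; apply qfact_neq0; auto.
    - apply cv_mult; apply qprod_cv; auto. }
  replace (qprod_inf (- p) p * qprod_inf (z * x) p * qprod_inf (x / z) p) with s; auto.
  rewrite <- Cmult_assoc, <- (cv_unique _ _ _ Hlim Hprod). field.
  apply qprod_inf_opp_neq0; auto.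
Qed.

(** * Theta functions *)

Definition theta (x z : C) : C := Lim (csum (theta_term x z)).

Lemma theta_eq_prod (x z : C) : x <> 0 -> z <> 0 -> Cmod x < 1 ->
  Cmod (z * x) <= 1 -> Cmod (x / z) <= 1 ->
  theta x z = qprod_inf (- (x * x)) (x * x) * qprod_inf (z * x) (x * x) * qprod_inf (x / z) (x * x).
Proof. intros. apply cv_Lim, jacobi_triple_product; auto. Qed.

Lemma theta_cv (x z : C) : x <> 0 -> z <> 0 -> Cmod x < 1 ->
  Cmod (z * x) <= 1 -> Cmod (x / z) <= 1 -> cv (csum (theta_term x z)) (theta x z).
Proof. intros. rewrite theta_eq_prod by auto. apply jacobi_triple_product; auto. Qed.

Lemma Cdiv_1_r (x : C) : x / 1 = x.
Proof. field. Qed.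

Lemma Copp_1_neq0 : (- (1) : C) <> 0.
Proof. intros E. apply C1_nz. replace (RtoC 1) with (- - (1) : C) by ring. rewrite E. ring. Qed.

Section ThetaProducts.

Variable x : C.
Hypothesis x_neq0 : x <> 0.
Hypothesis x_lt1 : Cmod x < 1.

Lemma theta_one_prod :
  theta x 1 = qprod_inf (- (x * x)) (x * x) * qprod_inf x (x * x) * qprod_inf x (x * x).
Proof.
  rewrite theta_eq_prod; rewrite ?Cmult_1_l, ?Cdiv_1_r; auto using C1_nz; lra.
Qed.

Lemma theta_mone_prod :
  theta x (- (1)) = qprod_inf (- (x * x)) (x * x) * qprod_inf (- x) (x * x) * qprod_inf (- x) (x * x).
Proof.
  replace (- x) with (- (1) * x) by ring. replace (- (1) * x) with (x / - (1)) at 2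
    by (field; apply C1_nz).
  apply theta_eq_prod; auto using Copp_1_neq0;
    [replace (- (1) * x) with (- x) by ring | replace (x / - (1)) with (- x) by (field; apply C1_nz)];
    rewrite Cmod_opp; lra.
Qed.

Lemma theta_self_prod :
  theta x x = 2 * qprod_inf (- (x * x)) (x * x) * qprod_inf (x * x) (x * x) * qprod_inf (x * x) (x * x).
Proof.
  rewrite theta_eq_prod; auto; [| apply Cmod_sqr_le; lra |].
  - replace (x / x) with (RtoC 1) by (field; auto). rewrite qprod_inf_one by (apply Cmod_sqr_lt; auto).
    ring.
  - replace (x / x) with (RtoC 1) by (field; auto). rewrite Cmod_1. lra.
Qed.

End ThetaProducts.

Lemma theta_term_S (x z : C) m : theta_term x z (S m) = x ^ (S m * S m) * (z ^ S m + (/ z) ^ S m).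
Proof. reflexivity. Qed.

Lemma theta_term_pair (x z : C) n : x <> 0 -> z * z = 1 ->
  theta_term x z (S (2 * n)) + theta_term x z (S (S (2 * n)))
  = theta_term (x ^ 4) 1 (S n) + z * x * theta_term (x ^ 4) (x ^ 4) (S n)
    + z * x ^ ((2 * n + 1) * (2 * n + 1)) - z * x ^ ((2 * S n + 1) * (2 * S n + 1)).
Proof.
  intros Hx Hz.
  assert (Hz0 : z <> 0) by (intros E; rewrite E in Hz; apply C1_nz; rewrite <- Hz; ring).
  assert (Hiz : / z = z) by (replace (/ z) with (/ z * (z * z)) by (rewrite Hz; ring); field; auto).
  assert (Hpz : forall m, z ^ (2 * m) = 1)
    by (intros; rewrite Cpow_mult_r; simpl; rewrite Cmult_1_r, Hz; apply Cpow_1_l).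
  assert (Hy : forall m, (x ^ 4) ^ m = x ^ (4 * m)) by (intros; rewrite Cpow_mult_r; auto).
  assert (Hiy : forall m, (/ x ^ 4) ^ m = (/ x) ^ (4 * m))
    by (intros; rewrite <- Cpow_inv, Cpow_mult_r by auto; auto).
  rewrite !theta_term_S, Hiz.
  replace (z ^ S (2 * n) + z ^ S (2 * n)) with (2 * z) by (rewrite Cpow_S, Hpz; ring).
  replace (z ^ S (S (2 * n)) + z ^ S (S (2 * n))) with (RtoC 2)
    by (replace (S (S (2 * n))) with (2 * S n)%nat by lia; rewrite Hpz; ring).
  replace (/ 1) with (RtoC 1) by field. rewrite !Hy, Hiy, !Cpow_1_l.
  assert (E1 : x * (x ^ (4 * (S n * S n)) * x ^ (4 * S n))
               = x ^ ((2 * S n + 1) * (2 * S n + 1))).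
  { rewrite <- Cpow_add_r, <- (Cpow_1_r x) at 1. rewrite <- Cpow_add_r. f_equal. nia. }
  assert (E2 : x * (x ^ (4 * (S n * S n)) * (/ x) ^ (4 * S n)) = x ^ ((2 * n + 1) * (2 * n + 1))).
  { transitivity (x ^ (1 + 4 * (S n * S n)) * (/ x) ^ (4 * S n));
      [rewrite Cpow_add_r, Cpow_1_r; ring|].
    rewrite (Cpow_balance x (/ x) _ _ ((2 * n + 1) * (2 * n + 1)) 0); [simpl; ring| |nia].
    field. auto. }
  assert (E3 : x ^ (S (2 * n + 1) * S (2 * n + 1)) = x ^ (4 * (S n * S n))) by (f_equal; nia).
  replace (S (2 * n)) with (2 * n + 1)%nat by lia. rewrite E3, <- E1, <- E2. ring.
Qed.

(* Indices k = 2m give theta (x^4) 1 and indices k = 2m + 1 give z x theta (x^4) (x^4); the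
   two truncations differ by the single term of index 2n + 1. *)
Lemma theta_term_parity_sum (x z : C) n : x <> 0 -> z * z = 1 ->
  csum (theta_term x z) (S (2 * n))
  = csum (theta_term (x ^ 4) 1) (S n) + z * x * csum (theta_term (x ^ 4) (x ^ 4)) (S n)
    - z * x ^ ((2 * n + 1) * (2 * n + 1)).
Proof.
  intros Hx Hz. induction n as [|n IH]; [simpl; unfold theta_term; simpl; ring|].
  replace (S (2 * S n)) with (S (S (S (2 * n)))) by lia.
  change (csum (theta_term x z) (S (S (S (2 * n)))))
    with (csum (theta_term x z) (S (2 * n)) + theta_term x z (S (2 * n))
          + theta_term x z (S (S (2 * n)))).
  change (csum (theta_term (x ^ 4) 1) (S (S n)))
    with (csum (theta_term (x ^ 4) 1) (S n) + theta_term (x ^ 4) 1 (S n)).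
  change (csum (theta_term (x ^ 4) (x ^ 4)) (S (S n)))
    with (csum (theta_term (x ^ 4) (x ^ 4)) (S n) + theta_term (x ^ 4) (x ^ 4) (S n)).
  rewrite <- Cplus_assoc, theta_term_pair, IH by auto. ring.
Qed.

Lemma theta_parity (x z : C) : x <> 0 -> Cmod x < 1 -> Cmod z = 1 -> z * z = 1 ->
  theta x z = theta (x ^ 4) 1 + z * x * theta (x ^ 4) (x ^ 4).
Proof.
  intros Hx Hx1 Hzm Hz.
  assert (Hz0 : z <> 0) by (intros E; rewrite E, Cmod_0 in Hzm; lra).
  assert (Hy0 : x ^ 4 <> 0) by (apply Cpow_nz; auto).
  assert (Hy1 : Cmod (x ^ 4) < 1)
    by (rewrite Cmod_pow; apply pow_lt_1_compat; [split; auto using Cmod_ge_0 | lia]).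
  assert (C1 : cv (csum (theta_term x z)) (theta x z)).
  { apply theta_cv; auto; [rewrite Cmod_mult | rewrite Cmod_div]; rewrite ?Hzm; auto; lra. }
  assert (C2 : cv (csum (theta_term (x ^ 4) 1)) (theta (x ^ 4) 1)).
  { apply theta_cv; rewrite ?Cmult_1_l, ?Cdiv_1_r; auto using C1_nz; lra. }
  assert (C3 : cv (csum (theta_term (x ^ 4) (x ^ 4))) (theta (x ^ 4) (x ^ 4))).
  { apply theta_cv; auto; [apply Cmod_sqr_le; lra|].
    replace (x ^ 4 / x ^ 4) with (RtoC 1) by (field; auto). rewrite Cmod_1. lra. }
  assert (C4 : cv (fun n => z * x ^ ((2 * n + 1) * (2 * n + 1))) 0).
  { apply (cv_geom_null _ 1 (Cmod x)); [split; auto using Cmod_ge_0|].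
    intros n. rewrite Cmod_mult, Hzm, Cmod_pow, !Rmult_1_l.
    apply pow_le_pow_decr; [split; auto using Cmod_ge_0; lra | nia]. }
  eapply cv_unique; [apply (cv_subseq _ _ (fun n => S (2 * n)) C1); intros; lia|].
  rewrite <- (Cminus_0_r (theta (x ^ 4) 1 + z * x * theta (x ^ 4) (x ^ 4))).
  eapply cv_ext; [exists O; intros n _; symmetry; apply theta_term_parity_sum; auto|].
  apply cv_minus; auto. apply cv_plus; [|apply cv_scal]; apply (cv_subseq _ _ S); auto.
Qed.

Section ThetaDuplication.

Variable x : C.
Hypothesis x_neq0 : x <> 0.
Hypothesis x_lt1 : Cmod x < 1.

Let xx_neq0 : x * x <> 0.
Proof. apply Cmult_neq_0; auto. Qed.

Let xx_lt1 : Cmod (x * x) < 1.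
Proof. apply Cmod_sqr_lt; auto. Qed.

Lemma theta_self_sqr : theta x x * theta x x = 2 * theta (x * x) (x * x) * theta (x * x) 1.
Proof.
  rewrite (theta_self_prod x), (theta_self_prod (x * x)), (theta_one_prod (x * x)) by auto.
  assert (E1 : qprod_inf (- (x * x)) (x * x) * qprod_inf (x * x) (x * x)
               = qprod_inf (- (x * x * (x * x))) (x * x * (x * x))).
  { rewrite Cmult_comm. apply qprod_inf_mul_opp; lra. }
  rewrite (qprod_inf_even_odd (x * x) (x * x)) at 3 4 by lra.
  transitivity (4 * (qprod_inf (- (x * x)) (x * x) * qprod_inf (x * x) (x * x))
               * (qprod_inf (- (x * x)) (x * x) * qprod_inf (x * x) (x * x))
               * qprod_inf (x * x) (x * x * (x * x))
               * qprod_inf (x * x * (x * x)) (x * x * (x * x))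
               * qprod_inf (x * x) (x * x * (x * x))
               * qprod_inf (x * x * (x * x)) (x * x * (x * x))); [ring|].
  rewrite E1. ring.
Qed.

Lemma theta_one_mul_mone : theta x 1 * theta x (- (1)) = theta (x * x) (- (1)) * theta (x * x) (- (1)).
Proof.
  rewrite (theta_one_prod x), (theta_mone_prod x), (theta_mone_prod (x * x)) by auto.
  assert (E1 : qprod_inf x (x * x) * qprod_inf (- x) (x * x)
               = qprod_inf (- (x * x)) (x * x * (x * x))) by (apply qprod_inf_mul_opp; lra).
  assert (E2 : qprod_inf (- (x * x)) (x * x)
               = qprod_inf (- (x * x)) (x * x * (x * x)) * qprod_inf (- (x * x * (x * x))) (x * x * (x * x))).
  { rewrite qprod_inf_even_odd; [f_equal; f_equal; ring | rewrite Cmod_opp; lra | lra]. }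
  rewrite E2 at 1 2.
  transitivity (qprod_inf (- (x * x)) (x * x * (x * x)) * qprod_inf (- (x * x * (x * x))) (x * x * (x * x))
    * (qprod_inf (- (x * x)) (x * x * (x * x)) * qprod_inf (- (x * x * (x * x))) (x * x * (x * x)))
    * (qprod_inf x (x * x) * qprod_inf (- x) (x * x)) * (qprod_inf x (x * x) * qprod_inf (- x) (x * x)));
    [ring|].
  rewrite E1. ring.
Qed.

Lemma theta_one_neq0 : theta x 1 <> 0.
Proof.
  rewrite (theta_one_prod x) by auto.
  repeat apply Cmult_neq_0; apply qprod_inf_neq0; rewrite ?Cmod_opp; auto.
Qed.

Lemma qprod_ratio_sqr :
  qprod_inf (x * x) (x * x) / qprod_inf x (x * x) * (qprod_inf (x * x) (x * x) / qprod_inf x (x * x))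
  = theta x x / (2 * theta x 1).
Proof.
  rewrite (theta_self_prod x), (theta_one_prod x) by auto.
  assert (qprod_inf (- (x * x)) (x * x) <> 0) by (apply qprod_inf_neq0; rewrite ?Cmod_opp; auto).
  assert (qprod_inf x (x * x) <> 0) by (apply qprod_inf_neq0; auto).
  field. auto.
Qed.

End ThetaDuplication.

(* Used with a, b = theta(x, +-1), c, d = theta(x^2, +-1), e = theta(x, x),
   f = theta(x^2, x^2), and u2, u3 (resp. v2, v3) = theta(y, y), theta(y, 1) at y = x^4
   (resp. y = x^8). *)
Lemma landen_algebra (t a b c d e f u2 u3 v2 v3 : C) :
  a = u3 + t * u2 -> b = u3 - t * u2 -> c = v3 + t * t * v2 -> d = v3 - t * t * v2 ->
  e * e = 2 * f * c -> f * f = 2 * u2 * u3 -> u2 * u2 = 2 * v2 * v3 -> a * b = d * d ->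
  a <> 0 -> c <> 0 ->
  (e / (2 * a)) * (e / (2 * a)) * (1 + 4 * t * ((f / (2 * c)) * (f / (2 * c)))) = f / (2 * c).
Proof.
  intros Ha Hb Hc Hd He Hf Hu Hab Ha0 Hc0.
  assert (Ec : c * c = u3 * u3 + t * t * u2 * u2).
  { transitivity (d * d + (c * c - d * d)); [ring|].
    replace (c * c - d * d) with (2 * (t * t) * (2 * v2 * v3)) by (rewrite Hc, Hd; ring).
    rewrite <- Hu, <- Hab, Ha, Hb. ring. }
  assert (Ea : a * a = c * c + t * (f * f)) by (rewrite Ec, Hf, Ha; ring).
  transitivity (e * e * (c * c + t * (f * f)) / (4 * (a * a) * (c * c))); [field; auto|].
  rewrite <- Ea, He. field. auto.
Qed.

(* In Jacobi's notation with nome x, [theta_ratio x] is theta_2(x) / (2 x^(1/4) theta_3(x)). *)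
Definition theta_ratio (x : C) : C := theta x x / (2 * theta x 1).

Theorem theta_ratio_landen (x : C) : x <> 0 -> Cmod x < 1 ->
  theta_ratio x * theta_ratio x * (1 + 4 * x * (theta_ratio (x * x) * theta_ratio (x * x)))
  = theta_ratio (x * x).
Proof.
  intros Hx Hx1.
  assert (Hxx : x * x <> 0) by (apply Cmult_neq_0; auto).
  assert (Hxx1 : Cmod (x * x) < 1) by (apply Cmod_sqr_lt; auto).
  assert (Hx4 : x ^ 4 <> 0) by (apply Cpow_nz; auto).
  assert (Hx41 : Cmod (x ^ 4) < 1)
    by (rewrite Cmod_pow; apply pow_lt_1_compat; [split; auto using Cmod_ge_0 | lia]).
  assert (Hm1 : Cmod (- (1)) = 1%R) by (rewrite Cmod_opp; apply Cmod_1).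
  unfold theta_ratio.
  apply (landen_algebra x _ (theta x (- (1))) _ (theta (x * x) (- (1))) _ _
           (theta (x ^ 4) (x ^ 4)) (theta (x ^ 4) 1)
           (theta ((x * x) ^ 4) ((x * x) ^ 4)) (theta ((x * x) ^ 4) 1)).
  - rewrite (theta_parity x 1) by (auto using Cmod_1; ring). ring.
  - rewrite (theta_parity x (- (1))) by (auto; ring). ring.
  - rewrite (theta_parity (x * x) 1) by (auto using Cmod_1; ring). ring.
  - rewrite (theta_parity (x * x) (- (1))) by (auto; ring). ring.
  - rewrite theta_self_sqr by auto. ring.
  - rewrite theta_self_sqr by auto. replace (x * x * (x * x)) with (x ^ 4) by ring. ring.
  - rewrite theta_self_sqr by auto. replace (x ^ 4 * x ^ 4) with ((x * x) ^ 4) by ring. ring.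
  - apply theta_one_mul_mone; auto.
  - apply theta_one_neq0; auto.
  - apply theta_one_neq0; auto.
Qed.

(** * The product p(tau) *)

Lemma cexp_add a b : cexp (a + b) = cexp a * cexp b.
Proof.
  destruct a as [a1 a2], b as [b1 b2]. unfold cexp, Cmult, Cplus, Re, Im. simpl.
  rewrite exp_plus, cos_plus, sin_plus. f_equal; ring.
Qed.

Lemma Cmod_cexp z : Cmod (cexp z) = exp (Re z).
Proof.
  destruct z as [a b]. unfold cexp, Cmod, Re, Im. cbn [fst snd].
  replace ((exp a * cos b) ^ 2 + (exp a * sin b) ^ 2)%R with (exp a * exp a)%R.
  - apply sqrt_square. left; apply exp_pos.
  - transitivity (exp a * exp a * (Rsqr (sin b) + Rsqr (cos b)))%R.
    + rewrite sin2_cos2. ring.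
    + unfold Rsqr. ring.
Qed.

Lemma qpow_add r1 r2 tau : qpow (r1 + r2) tau = qpow r1 tau * qpow r2 tau.
Proof.
  unfold qpow. rewrite <- cexp_add. f_equal.
  replace (2 * PI * (r1 + r2))%R with (2 * PI * r1 + 2 * PI * r2)%R by ring.
  rewrite RtoC_plus. ring.
Qed.

Lemma qpow_0 tau : qpow 0 tau = 1.
Proof.
  unfold qpow. rewrite Rmult_0_r, Cmult_0_l. unfold cexp. simpl.
  rewrite exp_0, cos_0, sin_0. apply injective_projections; simpl; ring.
Qed.

Lemma qpow_nat k r tau : qpow (INR k * r) tau = qpow r tau ^ k.
Proof.
  induction k as [|k IH]; [simpl; rewrite Rmult_0_l; apply qpow_0|].
  rewrite S_INR, Rmult_plus_distr_r, Rmult_1_l, qpow_add, IH. simpl. ring.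
Qed.

Lemma qpow_double_tau r tau : qpow r (2 * tau) = qpow (2 * r) tau.
Proof. unfold qpow. f_equal. rewrite !RtoC_mult. ring. Qed.

Lemma Cmod_qpow r tau : Cmod (qpow r tau) = exp (- (2 * PI * r * Im tau)).
Proof.
  unfold qpow. rewrite Cmod_cexp. f_equal.
  destruct tau as [a b]. unfold Re, Im, Ci, Cmult, RtoC. simpl. ring.
Qed.

Lemma qpow_lt1 r tau : 0 < r -> 0 < Im tau -> Cmod (qpow r tau) < 1.
Proof.
  intros Hr Ht. rewrite Cmod_qpow, <- exp_0. apply exp_increasing.
  pose proof PI_RGT_0. assert (0 < 2 * PI * r * Im tau)%R 
    by (apply Rmult_lt_0_compat; [apply Rmult_lt_0_compat|]; lra).
  lra.
Qed.

Lemma qpow_neq0 r tau : qpow r tau <> 0.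
Proof.
  intros E. assert (H := Cmod_qpow r tau). rewrite E, Cmod_0 in H.
  pose proof (exp_pos (- (2 * PI * r * Im tau))). lra.
Qed.

Section Nome.

Variable tau : C.
Hypothesis Im_tau_pos : 0 < Im tau.

Let t := qpow (1/4) tau.

Let t_lt1 : Cmod t < 1.
Proof. apply qpow_lt1; auto. lra. Qed.

Let tt_lt1 : Cmod (t * t) < 1.
Proof. apply Cmod_sqr_lt, t_lt1. Qed.

Lemma pfactor_eq n :
  pfactor tau (S n) = (1 + t * t * (t * t) ^ n) / (1 + t * (t * t) ^ n)
                      * ((1 + t * t * (t * t) ^ n) / (1 + t * (t * t) ^ n)).
Proof.
  unfold pfactor.
  replace (INR (S n) / 2 - 1/4)%R with (INR (S (2 * n)) * (1/4))%R
    by (rewrite !S_INR, mult_INR; simpl; field).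
  replace (INR (S n) / 2)%R with (INR (S (S (2 * n))) * (1/4))%R
    by (rewrite !S_INR, mult_INR; simpl; field).
  rewrite !qpow_nat, Cpow_sqr. fold t. simpl Cpow. rewrite !Cmult_assoc. reflexivity.
Qed.

Lemma ppartial_eq N :
  ppartial tau N = qprod (t * t) (t * t) N / qprod t (t * t) N
                   * (qprod (t * t) (t * t) N / qprod t (t * t) N).
Proof.
  induction N as [|N IH]; [unfold qprod; simpl; field|].
  simpl ppartial. rewrite IH, pfactor_eq, !qprod_S.
  assert (qprod t (t * t) N <> 0) by (apply qprod_neq0; auto).
  assert (1 + t * (t * t) ^ N <> 0) by (apply qprod_factor_neq0; auto).
  field. auto.
Qed.

Lemma ppartial_cv : cv (ppartial tau) (theta_ratio t).
Proof.
  unfold theta_ratio. rewrite <- qprod_ratio_sqr by (auto; apply qpow_neq0).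
  eapply cv_ext; [exists O; intros n _; symmetry; apply ppartial_eq|].
  assert (qprod_inf t (t * t) <> 0) by (apply qprod_inf_neq0; auto).
  apply cv_mult; apply cv_div; auto; apply qprod_cv; lra.
Qed.

Lemma pprod_eq : pprod tau = theta_ratio t.
Proof. apply (cv_Lim (ppartial tau)), ppartial_cv. Qed.

Lemma pprod_lim : filterlim (ppartial tau) eventually (locally (pprod tau)).
Proof. rewrite pprod_eq. apply ppartial_cv. Qed.

Lemma pfrak_eq : pfrak tau = 2 * qpow (1/16) tau * theta_ratio t.
Proof. unfold pfrak. rewrite pprod_eq. reflexivity. Qed.

End Nome.

Theorem proposition6 (tau : C) (Htau : 0 < Im tau) :
  filterlim (ppartial tau) eventually (locally (pprod tau)) /\
  filterlim (ppartial (Cmult 2 tau)) eventually (locally (pprod (Cmult 2 tau))) /\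
  Cminus
    (Cplus (Cmult (Cmult (pfrak tau) (pfrak tau))
                  (Cmult (pfrak (Cmult 2 tau)) (pfrak (Cmult 2 tau))))
           (Cmult (pfrak tau) (pfrak tau)))
    (Cmult 2 (pfrak (Cmult 2 tau))) = 0.
Proof.
  assert (Htau2 : 0 < Im (2 * tau)) by (destruct tau; simpl in *; lra).
  split; [apply pprod_lim; auto|]. split; [apply pprod_lim; auto|].
  set (s := qpow (1/16) tau). set (t := qpow (1/4) tau).
  assert (Ht : t = s * s * (s * s)).
  { unfold t, s. replace (1/4)%R with (INR 4 * (1/16))%R by (simpl; field).
    rewrite qpow_nat. simpl. ring. }
  assert (Hs2 : qpow (1/16) (2 * tau) = s * s).
  { rewrite qpow_double_tau. replace (2 * (1/16))%R with (INR 2 * (1/16))%R by (simpl; field).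
    rewrite qpow_nat. fold s. simpl. ring. }
  assert (Ht2 : qpow (1/4) (2 * tau) = t * t).
  { rewrite qpow_double_tau. replace (2 * (1/4))%R with (INR 2 * (1/4))%R by (simpl; field).
    rewrite qpow_nat. fold t. simpl. ring. }
  rewrite !pfrak_eq, Hs2, Ht2 by auto. fold s t.
  assert (Hlanden := theta_ratio_landen t (qpow_neq0 _ _) (qpow_lt1 (1/4) tau ltac:(lra) Htau)).
  set (A := theta_ratio t) in *. set (B := theta_ratio (t * t)) in *.
  transitivity (4 * (s * s) * (A * A * (1 + 4 * t * (B * B)) - B)); [rewrite Ht; ring|].
  rewrite Hlanden. ring.
Qed.
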